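(* For every tube $\mathcal T$, $\mathrm{fpdim}(\mathcal T)=1$.
   Context: $\Bbbk$ is algebraically closed. A tube (of rank $r\ge1$) is the $\Bbbk$-linear abelian category of finite-dimensional nilpotent representations of the quiver with $r$ vertices forming an oriented cycle (for $r=1$, one vertex with one loop). For a $\Bbbk$-linear abelian category $\mathcal C$: an object $M$ is a brick if $\mathrm{Hom}_{\mathcal C}(M,M)=\Bbbk$; a finite set $\phi=\{X_1,\dots,X_n\}$ of nonzero objects is a brick set if every $X_i$ is a brick and $\dim\mathrm{Hom}_{\mathcal C}(X_i,X_j)=\delta_{ij}$; its adjacency matrix is $C(\phi)=(\dim\mathrm{Ext}^1_{\mathcal C}(X_i,X_j))_{i,j}$; $\rho$ is the spectral radius; $\mathrm{fpdim}(\mathcal C)=\sup\{\rho(C(\phi)):\phi\text{ a brick set}\}$. *)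

From HB Require Import structures.
From mathcomp Require Import all_boot all_order all_algebra all_field.
Set Implicit Arguments. Unset Strict Implicit. Unset Printing Implicit Defensive.
Import Order.TTheory GRing.Theory Num.Theory.
Local Open Scope ring_scope.

(* A tube of rank r: nilpotent finite-dimensional representations of the
   cyclic quiver with vertices 'I_r and arrows i -> ordS i (a loop if r = 1).
   An object is encoded as a graded space k^n whose basis vector p sits at
   vertex [tlab p], together with the (row-vector convention) matrix [tmx]
   of all arrow maps, which has degree one and is nilpotent. *)
Record tube_obj (k : fieldType) (r : nat) := TubeObj {
  tdim : nat;
  tlab : 'I_tdim -> 'I_r;
  tmx : 'M[k]_tdim;
  tmx_deg : forall p q, tmx p q != 0 -> tlab q = ordS (tlab p);
  tmx_nil : tmx ^+ tdim = 0 }.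

Arguments tdim {k r} t.
Arguments tlab {k r} t _.
Arguments tmx {k r} t.

Section Tube.
Variables (k : fieldType) (r : nat).
Implicit Types M N : tube_obj k r.

(* graded linear maps of degree 0 (families of maps M_i -> N_i) *)
Definition deg0_space M N : {vspace 'M[k]_(tdim M, tdim N)} :=
  lker (linfun (fun F : 'M[k]_(tdim M, tdim N) =>
    \matrix_(p, q) (if tlab N q == tlab M p then 0 else F p q))).

(* graded linear maps of degree 1 (families M_i -> N_{ordS i}, one per arrow) *)
Definition deg1_space M N : {vspace 'M[k]_(tdim M, tdim N)} :=
  lker (linfun (fun F : 'M[k]_(tdim M, tdim N) =>
    \matrix_(p, q) (if tlab N q == ordS (tlab M p) then 0 else F p q))).

Definition tdelta M N (F : 'M[k]_(tdim M, tdim N)) : 'M[k]_(tdim M, tdim N) :=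
  tmx M *m F - F *m tmx N.

Definition homT M N : {vspace 'M[k]_(tdim M, tdim N)} :=
  (deg0_space M N :&: lker (linfun (@tdelta M N)))%VS.

Definition dimHom M N : nat := \dim (homT M N).

(* Ext^1_T(M,N) = cokernel of the standard (Ringel) map
   delta : (+)_i Hom(M_i,N_i) -> (+)_{a:i->j} Hom(M_i,N_j) *)
Definition dimExt M N : nat :=
  (\dim (deg1_space M N) - \dim (linfun (@tdelta M N) @: deg0_space M N))%N.

Definition is_brick M : Prop := dimHom M M = 1%N.

Definition brick_set (t : nat) (X : 'I_t -> tube_obj k r) : Prop :=
  (forall i, 0 < tdim (X i))%N /\ (forall i, is_brick (X i)) /\
  (forall i j, dimHom (X i) (X j) = (i == j) :> nat).

Definition adjacency (t : nat) (X : 'I_t -> tube_obj k r) : 'M[algC]_t :=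
  \matrix_(i, j) (dimExt (X i) (X j))%:R.

End Tube.

Definition spectral_radius (t : nat) (A : 'M[algC]_t) : algC :=
  \big[Num.max/0]_(z <- sval (closed_field_poly_normal (char_poly A))) `|z|.

Definition fpdim_values (k : fieldType) (r : nat) : algC -> Prop :=
  fun x => exists (t : nat) (X : 'I_t -> tube_obj k r),
    brick_set X /\ x = spectral_radius (adjacency X).

Definition is_sup (S : algC -> Prop) (x : algC) : Prop :=
  (forall y, S y -> y <= x) /\
  (forall e : algC, 0 < e -> exists y, S y /\ x - e < y).

From HB Require Import structures.
From mathcomp Require Import all_boot all_order all_algebra all_field.
Set Implicit Arguments. Unset Strict Implicit. Unset Printing Implicit Defensive.
Import Order.TTheory GRing.Theory Num.Theory.
Local Open Scope ring_scope.

(* For objects M, N of dimension vectors a, b, the Euler form of the cyclic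
   quiver gives dim Hom(M,N) - dim Ext^1(M,N) = sum_v a_v b_v - sum_v a_v b_(v+1).
   For a brick set X_1, ..., X_n the adjacency matrix is therefore
   C = I + B1 - B0, with B0, B1 the Gram matrices of these two bilinear forms
   on the dimension vectors, and for w >= 0 the quadratic form w C w^T equals
   |w|^2 - q(y), where y = sum_i w_i dim X_i and
   q(y) = sum_v y_v^2 - sum_v y_v y_(v+1) is the Tits form of the cycle,
   which is nonnegative. As C has nonnegative entries, a left eigenvector u
   with eigenvalue z gives, for w = |u|, |z| |w|^2 <= w C w^T <= |w|^2, so
   rho(C) <= 1. Conversely the simple objects S_0, ..., S_(r-1) form a brick
   set whose adjacency matrix is the permutation matrix of v |-> v+1, which
   has eigenvalue 1. *)

Section SupportSpace.
Variables (K : fieldType) (m n : nat) (P : 'I_m -> 'I_n -> bool).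

Definition mask_mx (F : 'M[K]_(m, n)) : 'M[K]_(m, n) :=
  \matrix_(p, q) (if P p q then 0 else F p q).

Fact mask_mx_is_linear : linear mask_mx.
Proof.
move=> a F G; apply/matrixP => p q; rewrite !mxE.
by case: (P p q); rewrite ?mulr0 ?addr0 // !mxE.
Qed.

HB.instance Definition _ := GRing.isLinear.Build K _ _ _ mask_mx mask_mx_is_linear.

Definition supp_space : {vspace 'M[K]_(m, n)} := lker (linfun mask_mx).

Lemma supp_spaceP (F : 'M[K]_(m, n)) :
  reflect (forall p q, ~~ P p q -> F p q = 0) (F \in supp_space).
Proof.
rewrite memv_ker lfunE; apply: (iffP eqP) => [/matrixP F0 p q nPpq | F0].
  by have := F0 p q; rewrite !mxE (negbTE nPpq).
by apply/matrixP => p q; rewrite !mxE; case: ifPn => // /F0.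
Qed.

Definition supp_set := [set pq : 'I_m * 'I_n | P pq.1 pq.2].

Definition fill_mx (v : 'rV[K]_#|supp_set|) : 'M[K]_(m, n) :=
  \sum_i v 0 i *: delta_mx (enum_val i).1 (enum_val i).2.

Fact fill_mx_is_linear : linear fill_mx.
Proof.
move=> a u v; rewrite /fill_mx scaler_sumr -big_split; apply: eq_bigr => i _.
by rewrite !mxE scalerDl scalerA.
Qed.

HB.instance Definition _ := GRing.isLinear.Build K _ _ _ fill_mx fill_mx_is_linear.

Lemma fill_mxE v p q : fill_mx v p q = \sum_i v 0 i * (enum_val i == (p, q))%:R.
Proof.
rewrite summxE; apply: eq_bigr => i _; rewrite !mxE.
by rewrite [enum_val i]surjective_pairing xpair_eqE [p == _]eq_sym [q == _]eq_sym.
Qed.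

Lemma fill_mx_out v p q : ~~ P p q -> fill_mx v p q = 0.
Proof.
move=> nPpq; rewrite fill_mxE big1 // => i _.
have := enum_valP i; case: eqP => [-> | _]; last by rewrite mulr0.
by rewrite inE (negbTE nPpq).
Qed.

Lemma fill_mx_enum v i : fill_mx v (enum_val i).1 (enum_val i).2 = v 0 i.
Proof.
rewrite fill_mxE -surjective_pairing (bigD1 i) //= eqxx mulr1 big1 ?addr0 // => j ji.
by rewrite (inj_eq enum_val_inj) (negbTE ji) mulr0.
Qed.

Lemma supp_space_fill : supp_space = limg (linfun fill_mx).
Proof.
apply/vspaceP => F; apply/idP/idP => [/supp_spaceP F0 | /memv_imgP[v _ ->]].
  pose v : 'rV_#|supp_set| := \row_i F (enum_val i).1 (enum_val i).2.
  suff <- : fill_mx v = F by rewrite -lfunE memv_img ?memvf.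
  apply/matrixP => p q; case: (boolP (P p q)) => [Ppq | nPpq]; last first.
    by rewrite fill_mx_out ?F0.
  have Dpq : (p, q) \in supp_set by rewrite inE.
  by have := fill_mx_enum v (enum_rank_in Dpq (p, q)); rewrite mxE enum_rankK_in.
by apply/supp_spaceP => p q; rewrite lfunE; exact: fill_mx_out.
Qed.

Lemma lker_fill_mx : lker (linfun fill_mx) = 0%VS.
Proof.
apply/eqP/lker0P => u v; rewrite !lfunE => Euv; apply/rowP => i.
by rewrite -!fill_mx_enum Euv.
Qed.

Lemma dim_supp_space : \dim supp_space = #|supp_set|.
Proof.
rewrite supp_space_fill limg_dim_eq ?lker_fill_mx ?capv0 //.
by rewrite dimvf dim_matrix mul1r.
Qed.

End SupportSpace.

Lemma card_label_pairs (A B V : finType) (a : A -> V) (b : B -> V) (f : V -> V) :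
  #|[set xy : A * B | b xy.2 == f (a xy.1)]| =
  (\sum_v #|[set x | a x == v]| * #|[set y | b y == f v]|)%N.
Proof.
rewrite -sum1_card (partition_big (fun xy => a xy.1) xpredT) //=.
apply: eq_bigr => v _; rewrite -cardsX -sum1_card; apply: eq_bigl => -[x y].
by rewrite !inE /= andbC; case: eqP => // ->.
Qed.

Definition vdim (k : fieldType) (r : nat) (M : tube_obj k r) (v : 'I_r) : nat :=
  #|[set p | tlab M p == v]|.

Section TubeEuler.
Variables (k : fieldType) (r : nat) (M N : tube_obj k r).

Fact tdelta_is_linear : linear (@tdelta k r M N).
Proof.
move=> a F G; rewrite /tdelta mulmxDr mulmxDl -!scalemxAr -!scalemxAl.
by rewrite scalerBr opprD addrACA.
Qed.

HB.instance Definition _ :=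
  GRing.isLinear.Build k _ _ _ (@tdelta k r M N) tdelta_is_linear.

Lemma deg0_spaceE :
  deg0_space M N = supp_space k (fun p q => tlab N q == tlab M p).
Proof. by []. Qed.

Lemma deg1_spaceE :
  deg1_space M N = supp_space k (fun p q => tlab N q == ordS (tlab M p)).
Proof. by []. Qed.

Lemma dim_deg0_space : \dim (deg0_space M N) = (\sum_v vdim M v * vdim N v)%N.
Proof. rewrite deg0_spaceE dim_supp_space; exact: (card_label_pairs _ _ id). Qed.

Lemma dim_deg1_space :
  \dim (deg1_space M N) = (\sum_v vdim M v * vdim N (ordS v))%N.
Proof. rewrite deg1_spaceE dim_supp_space; exact: card_label_pairs. Qed.

Lemma tdelta_deg0_sub_deg1 :
  (linfun (@tdelta k r M N) @: deg0_space M N <= deg1_space M N)%VS.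
Proof.
apply/subvP => _ /memv_imgP[F /supp_spaceP F0 ->]; rewrite lfunE deg1_spaceE.
apply/supp_spaceP => p q nq; rewrite !mxE !big1 ?subrr // => j _.
  have [->|nz] := eqVneq (tmx N j q) 0; first by rewrite mulr0.
  by rewrite F0 ?mul0r //; apply: contra nq => /eqP e; rewrite (tmx_deg nz) e.
have [->|nz] := eqVneq (tmx M p j) 0; first by rewrite mul0r.
by rewrite F0 ?mulr0 // (tmx_deg nz).
Qed.

Lemma euler_dimHom_dimExt :
  (dimHom M N + \sum_v vdim M v * vdim N (ordS v) =
   \sum_v vdim M v * vdim N v + dimExt M N)%N.
Proof.
rewrite /dimHom /dimExt -dim_deg0_space -dim_deg1_space /homT.
rewrite -(limg_ker_dim (linfun (@tdelta k r M N)) (deg0_space M N)) -addnA.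
by rewrite subnKC ?dimvS ?tdelta_deg0_sub_deg1.
Qed.

End TubeEuler.

Lemma sum_mul_perm_le_sum_sqr (R : numDomainType) (T : finType) (f : T -> T)
    (y : T -> R) :
  injective f -> (forall v, y v \is Num.real) ->
  \sum_v y v * y (f v) <= \sum_v y v ^+ 2.
Proof.
move=> f_inj y_real; rewrite -(@ler_pMn2r _ 2) //.
have -> : (\sum_v y v ^+ 2) *+ 2 = \sum_v (y v ^+ 2 + y (f v) ^+ 2).
  rewrite [RHS]big_split mulr2n /=; congr (_ + _).
  exact: (reindex_inj f_inj (P := xpredT) (F := fun v => y v ^+ 2)).
rewrite -sumrMnl; apply: ler_sum => v _; exact: real_leif_mean_square_scaled.
Qed.

Lemma sum_bilinear_expand (R : comPzSemiRingType) (I V : finType) (w : I -> R)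
    (a : I -> V -> R) (f : V -> V) :
  \sum_i \sum_j w i * w j * \sum_v a i v * a j (f v) =
  \sum_v (\sum_i w i * a i v) * (\sum_j w j * a j (f v)).
Proof.
under [RHS]eq_bigr do rewrite big_distrlr /=.
rewrite [RHS]exchange_big; apply: eq_bigr => i _; rewrite [RHS]exchange_big.
apply: eq_bigr => j _; rewrite mulr_sumr; apply: eq_bigr => v _.
by rewrite mulrACA.
Qed.

Lemma eigen_norm_quadratic_le (R : numDomainType) (t : nat) (A : 'M[R]_t)
    (u : 'rV_t) z :
  (forall i j, 0 <= A i j) -> u *m A = z *: u ->
  `|z| * \sum_j `|u 0 j| ^+ 2 <= \sum_i \sum_j `|u 0 i| * `|u 0 j| * A i j.
Proof.
move=> A_ge0 Au; rewrite mulr_sumr exchange_big /=; apply: ler_sum => j _.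
have Auj : `|z| * `|u 0 j| <= \sum_i `|u 0 i| * A i j.
  rewrite -normrM; have /matrixP/(_ 0 j) := Au; rewrite !mxE => <-.
  apply: le_trans (ler_norm_sum _ _ _) _; apply: ler_sum => i _.
  by rewrite normrM (ger0_norm (A_ge0 i j)).
rewrite expr2 mulrA; apply: le_trans (ler_wpM2r (normr_ge0 _) Auj) _.
by rewrite mulr_suml; apply: ler_sum => i _; rewrite mulrAC.
Qed.

Section BrickSet.
Variables (k : fieldType) (r t : nat) (X : 'I_t -> tube_obj k r).
Hypothesis brickX : brick_set X.

Lemma brick_set_adjacencyE i j :
  adjacency X i j = (i == j)%:R
    + \sum_v (vdim (X i) v)%:R * (vdim (X j) (ordS v))%:R
    - \sum_v (vdim (X i) v)%:R * (vdim (X j) v)%:R.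
Proof.
have [_ [_ homX]] := brickX.
rewrite mxE; under eq_bigr do rewrite -natrM.
under [s in _ - s]eq_bigr do rewrite -natrM.
have := congr1 (GRing.natmul (1 : algC)) (euler_dimHom_dimExt (X i) (X j)).
by rewrite homX -!natr_sum !natrD => ->; rewrite addrC addKr.
Qed.

Lemma adjacency_form_le (w : 'I_t -> algC) : (forall i, 0 <= w i) ->
  \sum_i \sum_j w i * w j * adjacency X i j <= \sum_i w i ^+ 2.
Proof.
move=> w_ge0; pose a i v : algC := (vdim (X i) v)%:R.
pose y v := \sum_i w i * a i v.
have y_real v : y v \is Num.real.
  by apply/ger0_real/sumr_ge0 => i _; rewrite mulr_ge0 ?ler0n.
have diag : \sum_i \sum_j w i * w j * (i == j)%:R = \sum_i w i ^+ 2.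
  apply: eq_bigr => i _; rewrite (bigD1 i) //= eqxx mulr1 big1 ?addr0 // => j ji.
  by rewrite eq_sym (negbTE ji) mulr0.
under eq_bigr do under eq_bigr do rewrite brick_set_adjacencyE mulrBr mulrDr.
under eq_bigr do rewrite sumrB big_split /=.
rewrite sumrB big_split /= diag (sum_bilinear_expand w a (@ordS r)).
rewrite (sum_bilinear_expand w a id) -addrA gerDl subr_le0.
under [s in _ <= s]eq_bigr do rewrite -expr2.
exact: (sum_mul_perm_le_sum_sqr (@ordS_inj r) y_real).
Qed.

Lemma brick_set_eigenvalue_le1 z : eigenvalue (adjacency X) z -> `|z| <= 1.
Proof.
case/eigenvalueP => u Hu u_neq0.
have S_gt0 : 0 < \sum_j `|u 0 j| ^+ 2.
  have sqr_ge0 j : 0 <= `|u 0 j| ^+ 2 by rewrite exprn_ge0.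
  rewrite lt_def sumr_ge0 ?andbT //; apply: contraNneq u_neq0.
  move=> /(psumr_eq0P (fun j _ => sqr_ge0 j)) u0; apply/eqP/rowP => j.
  by have /eqP := u0 j isT; rewrite sqrf_eq0 normr_eq0 mxE => /eqP.
have C_ge0 i j : 0 <= adjacency X i j by rewrite mxE ler0n.
have := le_trans (eigen_norm_quadratic_le C_ge0 Hu)
  (adjacency_form_le (fun i => normr_ge0 (u 0 i))).
by rewrite ger_pMl.
Qed.

End BrickSet.

Section SpectralRadius.
Variables (t : nat) (A : 'M[algC]_t).

Lemma mem_char_poly_roots z :
  (z \in sval (closed_field_poly_normal (char_poly A))) = eigenvalue A z.
Proof.
rewrite eigenvalue_root_char; case: closed_field_poly_normal => s /= ->.
by rewrite (monicP (char_poly_monic A)) scale1r root_prod_XsubC.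
Qed.

Lemma spectral_radius_le c :
  (forall z, eigenvalue A z -> `|z| <= c) -> 0 <= c -> spectral_radius A <= c.
Proof.
move=> eig_le c_ge0; rewrite /spectral_radius big_seq.
apply: (big_ind (fun x => x <= c)) => // [x y xc yc | z].
  by rewrite maxElt; case: ifP.
by rewrite mem_char_poly_roots; exact: eig_le.
Qed.

Lemma eigenvalue_le_spectral_radius z :
  eigenvalue A z -> `|z| <= spectral_radius A.
Proof.
rewrite -mem_char_poly_roots /spectral_radius.
elim: (sval _) => //= x s IHs; rewrite inE big_cons.
have real_max : \big[Num.max/0]_(y <- s) `|y| \is Num.real.
  by apply: bigmax_real => // y _; exact: normr_real.
rewrite comparable_le_max ?real_comparable ?normr_real //.
by case/orP => [/eqP -> | /IHs ->]; rewrite ?lexx ?orbT.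
Qed.

End SpectralRadius.

Lemma brick_set_spectral_radius_le1 (k : fieldType) (r t : nat)
    (X : 'I_t -> tube_obj k r) :
  brick_set X -> spectral_radius (adjacency X) <= 1.
Proof.
move=> brickX; apply: spectral_radius_le => // z.
exact: brick_set_eigenvalue_le1.
Qed.

Section ZeroArrows.
Variables (k : fieldType) (r : nat) (M N : tube_obj k r).
Hypotheses (M0 : tmx M = 0) (N0 : tmx N = 0).

Lemma tdelta_tmx0 : linfun (@tdelta k r M N) = 0%VF.
Proof.
apply/lfunP => F; rewrite lfunE zero_lfunE /= /tdelta.
by rewrite M0 N0 mul0mx mulmx0 subrr.
Qed.

Lemma dimHom_tmx0 : dimHom M N = \dim (deg0_space M N).
Proof.
rewrite /dimHom /homT tdelta_tmx0; congr (\dim _); apply/capv_idPl.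
by apply/subvP => F _; rewrite memv_ker zero_lfunE.
Qed.

Lemma dimExt_tmx0 : dimExt M N = \dim (deg1_space M N).
Proof. by rewrite /dimExt tdelta_tmx0 lim0g dimv0 subn0. Qed.

End ZeroArrows.

Lemma sumn_delta_mull (T : finType) (u : T) (F : T -> nat) :
  (\sum_w (u == w) * F w = F u)%N.
Proof.
rewrite (bigD1 u) //= eqxx mul1n big1 ?addn0 // => w wu.
by rewrite eq_sym (negbTE wu).
Qed.

Section SimpleObjects.
Variables (k : fieldType) (r : nat).

Fact simple_tmx_deg (v : 'I_r) (p q : 'I_1) :
  (0 : 'M[k]_1) p q != 0 -> v = ordS v.
Proof. by rewrite mxE eqxx. Qed.

Definition simple_obj (v : 'I_r) : tube_obj k r :=
  TubeObj (simple_tmx_deg v) (expr1 0).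

Lemma vdim_simple u v : vdim (simple_obj u) v = (u == v).
Proof. by rewrite /vdim; case: eqP => _; rewrite ?cardsT ?cards0 ?card_ord. Qed.

Lemma dimHom_simple u v : dimHom (simple_obj u) (simple_obj v) = (u == v).
Proof.
rewrite dimHom_tmx0 // dim_deg0_space.
by under eq_bigr do rewrite !vdim_simple; rewrite sumn_delta_mull eq_sym.
Qed.

Lemma dimExt_simple u v : dimExt (simple_obj u) (simple_obj v) = (v == ordS u).
Proof.
rewrite dimExt_tmx0 // dim_deg1_space.
by under eq_bigr do rewrite !vdim_simple; rewrite sumn_delta_mull.
Qed.

Lemma brick_set_simple : brick_set simple_obj.
Proof.
by split=> [//|]; split=> [v|u v]; rewrite /is_brick dimHom_simple ?eqxx.
Qed.

Lemma eigenvalue1_adjacency_simple :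
  (0 < r)%N -> eigenvalue (adjacency simple_obj) 1.
Proof.
move=> r_gt0; apply/eigenvalueP; exists (const_mx 1); last first.
  apply/eqP => /matrixP/(_ 0 (Ordinal r_gt0)) /eqP.
  by rewrite !mxE oner_eq0.
apply/rowP => j; rewrite !mxE mulr1.
under eq_bigr do rewrite !mxE dimExt_simple mul1r.
rewrite (reindex_inj (@ord_pred_inj r)) /=.
under eq_bigr do rewrite ord_predK.
rewrite (bigD1 j) //= eqxx big1 ?addr0 // => i ij.
by rewrite eq_sym (negbTE ij).
Qed.

End SimpleObjects.

Theorem corollary5p2 (k : closedFieldType) (r : nat) (hr : (0 < r)%N) :
  is_sup (fpdim_values k r) 1.
Proof.
split=> [_ [t [X [brickX ->]]] | e e_gt0].
  exact: brick_set_spectral_radius_le1.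
exists (spectral_radius (adjacency (@simple_obj k r))); split.
  by exists r, (@simple_obj k r); split; first exact: brick_set_simple.
apply: (@lt_le_trans _ _ 1); first by rewrite ltrBlDr ltrDl.
rewrite -normr1; apply: eigenvalue_le_spectral_radius.
exact: eigenvalue1_adjacency_simple.
Qed.
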